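(* The set FIN of programs computing a function with finite domain has asymptotic probability one, and the set COF of programs computing a function with cofinite domain has asymptotic probability zero.
   Context: Model of computation: a single head reads and writes symbols $0,1$ on a one-way infinite tape with cells indexed $0,1,2,\dots$; the head starts on cell $0$. An $n$-state program has states $Q=\{q_1,\dots,q_n\}$, with $q_1$ the start state, plus a separate halt state not in $Q$. A program is a function $p: Q\times\{0,1\}\to (Q\cup\{\mathrm{halt}\})\times\{0,1\}\times\{L,R\}$; $p(q,i)=\langle r,j,d\rangle$ means: in state $q$ reading $i$, write $j$, move one cell in direction $d$, enter state $r$. The computation stops when the halt state is reached (''halting'') or when the head attempts to move left from cell $0$ (''falls off the tape''); falling off is not counted as halting. Let $P_n$ be the set of all $n$-state programs; the asymptotic probability of a set $B$ of programs is $\mu(B)=\lim_{n\to\infty}|B\cap P_n|/|P_n|$. Programs compute partial functions on $\mathbb{N}$ with input given in unary: input $m$ is a block of $1$s of length determined by $m$ starting at cell $0$, followed by $0$s; the domain of the function computed by $p$ is the set of inputs on which $p$ halts. FIN is the set of programs whose computed function has finite domain; COF is the set of programs whose computed function has cofinite domain. *)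

From HB Require Import structures.
From mathcomp Require Import all_boot all_order all_algebra.
From mathcomp Require Import boolp classical_sets reals topology normedtype sequences.
Set Implicit Arguments. Unset Strict Implicit. Unset Printing Implicit Defensive.
Import Order.TTheory GRing.Theory Num.Theory numFieldNormedType.Exports.

(* Programs with n.+1 states: states are 'I_n.+1, start state q_1 = ord0.
   The halt state is None. Symbols 0/1 are false/true.
   Direction: true = R (right), false = L (left). *)
Definition prog (n : nat) : finType :=
  {ffun ('I_n.+1 * bool) -> option 'I_n.+1 * bool * bool}.

Inductive status (n : nat) :=
| Running of 'I_n.+1 & (nat -> bool) & nat   (* state, tape, head position *)
| Halted
| FellOff.
Arguments Halted {n}.
Arguments FellOff {n}.

Definition step n (p : prog n) (s : status n) : status n :=
  match s with
  | Running q tp h =>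
      let: (r, j, d) := p (q, tp h) in
      let tp' := fun k => if k == h then j else tp k in
      if d then
        (match r with None => Halted | Some r' => Running r' tp' h.+1 end)
      else if h == 0 then FellOff
      else (match r with None => Halted | Some r' => Running r' tp' h.-1 end)
  | Halted => Halted
  | FellOff => FellOff
  end.

(* unary input m: cells 0..m hold 1 (a block of m+1 ones), then 0s *)
Definition init n (m : nat) : status n :=
  Running ord0 (fun k => k <= m) 0.

Definition halts n (p : prog n) (m : nat) : Prop :=
  exists t, iter t (step p) (init n m) = Halted.

Definition FIN n (p : prog n) : Prop :=
  exists N, forall m, halts p m -> m < N.
Definition COF n (p : prog n) : Prop :=
  exists N, forall m, N <= m -> halts p m.

Definition proportion (R : realType) (B : forall n, prog n -> Prop) (n : nat) : R :=
  (#|[pred p : prog n | `[< B n p >]]|%:R / #|{: prog n}|%:R)%R.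

Definition asym_prob_is (R : realType) (B : forall n, prog n -> Prop) (l : R) : Prop :=
  (proportion R B @ \oo --> l)%classic.
Arguments proportion R B n : clear implicits.
Arguments asym_prob_is R B l : clear implicits.

From mathcomp Require Import all_boot all_order all_algebra.
From mathcomp Require Import boolp classical_sets reals topology normedtype sequences.
From mathcomp Require Import zify ring.
(* A program that falls off the tape within T steps on input T does so on every input
   m >= T, because in T steps the head only reads cells 0..T, which hold 1s for all these
   inputs; such a program is in FIN, and FIN and COF are disjoint.  It thus suffices to show
   that few programs are still alive after T steps on input T, for T fixed and n large.
   Call a run fresh while each step enters a state not visited before.  A fresh step reads
   a table entry that was never read, so resampling that entry permutes the programs and
   the head moves like a fair random walk: the proportion of runs that stay fresh and on the
   tape for T steps is at most the survival probability of that walk, which tends to 0 with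
   T.  A run that stops being fresh at step t < T halts or revisits one of t + 1 states,
   which happens for a proportion O(t / n) of programs. *)

Set Implicit Arguments. Unset Strict Implicit. Unset Printing Implicit Defensive.
Import Order.TTheory GRing.Theory Num.Theory numFieldNormedType.Exports.
Local Open Scope classical_set_scope.
Local Open Scope ring_scope.

Section Survival.
Variable R : realType.

(* probability that a fair walk started at h makes t steps without stepping below 0 *)
Fixpoint survival (t h : nat) : R :=
  if t is t'.+1 then (survival t' h.+1 + (if h is h'.+1 then survival t' h' else 0)) / 2
  else 1.

Lemma survivalS t h :
  survival t.+1 h = (survival t h.+1 + (if h is h'.+1 then survival t h' else 0)) / 2.
Proof. by []. Qed.

Lemma survival_ge0 t h : 0 <= survival t h.
Proof. by elim: t h => [|t IH] [|h] //=; rewrite divr_ge0 ?addr_ge0. Qed.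

Lemma survival_le1 t h : survival t h <= 1.
Proof.
elim: t h => [|t IH] h //=; rewrite ler_pdivrMr // mul1r.
by apply: lerD; case: h => [|h] //; exact: ler01.
Qed.

Lemma survival_nonincreasing h : {homo survival^~ h : t t' / (t <= t')%N >-> t' <= t}.
Proof.
have decr t h' : survival t.+1 h' <= survival t h'.
  elim: t h' => [|t IH] h'; first exact: survival_le1.
  rewrite [survival t.+2 h']survivalS [survival t.+1 h']survivalS ler_pM2r ?invr_gt0 //.
  by apply: lerD => //; case: h'.
by move=> t t' /subnK <-; elim: (t' - t)%N => // k IH; rewrite addSn (le_trans (decr _ _)).
Qed.

Lemma survival_cvg h : cvgn (survival^~ h).
Proof.
apply: nonincreasing_is_cvgn; first exact: survival_nonincreasing.
by exists 0 => _ [t _ <-]; exact: survival_ge0.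
Qed.

Local Notation lim_survival h := (limn (survival^~ h)).

Lemma lim_survivalS h :
  lim_survival h *+ 2 = lim_survival h.+1 + (if h is h'.+1 then lim_survival h' else 0).
Proof.
have cvgS h' : (fun t => survival t.+1 h') @ \oo --> lim_survival h'.
  by rewrite (cvg_shiftS (survival^~ h')); exact: survival_cvg.
have e : (fun t => survival t.+1 h *+ 2) =
         (fun t => survival t h.+1 + (if h is h'.+1 then survival t h' else 0)).
  by apply/funext => t; rewrite survivalS -[X in X = _]mulr_natr divfK // pnatr_eq0.
have c1 : (fun t => survival t.+1 h *+ 2) @ \oo --> lim_survival h *+ 2.
  by apply: cvgMn; exact: cvgS.
have c2 : (fun t => survival t h.+1 + (if h is h'.+1 then survival t h' else 0)) @ \oo -->
          lim_survival h.+1 + (if h is h'.+1 then lim_survival h' else 0).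
  apply: cvgD; first exact: survival_cvg.
  by case: h {e c1} => [|h]; [exact: cvg_cst | exact: survival_cvg].
by rewrite e in c1; rewrite -(cvg_lim _ c1) // (cvg_lim _ c2).
Qed.

(* the limit is harmonic in h and vanishes at -1, hence linear *)
Lemma lim_survival_linear h : lim_survival h = h.+1%:R * lim_survival 0.
Proof.
suff [] : lim_survival h = h.+1%:R * lim_survival 0 /\
          lim_survival h.+1 = h.+2%:R * lim_survival 0 by [].
elim: h => [|h [IH IH1]]; first by have := lim_survivalS 0; rewrite addr0 mul1r mulr_natl.
split=> //; apply: (addIr (lim_survival h)); rewrite -lim_survivalS IH IH1.
by ring.
Qed.

Lemma lim_survival0 : lim_survival 0 = 0.
Proof.
have ge0 : 0 <= lim_survival 0.
  by apply: limr_ge; [exact: survival_cvg | apply: nearW => t; exact: survival_ge0].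
have le1 h : h.+1%:R * lim_survival 0 <= 1.
  rewrite -lim_survival_linear (le_trans _ (survival_le1 0 h)) //.
  exact: nonincreasing_cvgn_ge (@survival_nonincreasing h) (@survival_cvg h) 0.
apply/eqP; rewrite eq_le ge0 andbT; apply/ler_addgt0Pr => e e0; rewrite add0r.
have lt_e : e^-1 < (Num.truncn e^-1).+1%:R by exact: truncnS_gt.
rewrite -(@ler_pM2l _ (Num.truncn e^-1).+1%:R) ?ltr0Sn // (le_trans (le1 _)) //.
by rewrite -ler_pdivrMr // div1r (ltW lt_e).
Qed.

Lemma survival_small (e : R) : 0 < e -> exists T, survival T 0 <= e.
Proof.
move=> e0; have : survival^~ 0 @ \oo --> (0 : R).
  by rewrite -lim_survival0; exact: survival_cvg.
move/cvgrPdist_le => /(_ e e0) [T _ HT]; exists T.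
by have := HT T (leqnn T); rewrite sub0r normrN ger0_norm ?survival_ge0.
Qed.

End Survival.

Lemma sumr_indicator (R : pzSemiRingType) (X : finType) (A : {pred X}) :
  \sum_(x : X) ((x \in A)%:R : R) = #|A|%:R.
Proof.
by rewrite -sum1_card natr_sum [RHS]big_mkcond; apply: eq_bigr => x _; case: (x \in A).
Qed.

Section Resample.
Variables (K V : finType).

Definition ffun_upd (f : {ffun K -> V}) (k : K) (v : V) : {ffun K -> V} :=
  [ffun x => if x == k then v else f x].

Lemma ffun_upd_eq f k v : ffun_upd f k v k = v.
Proof. by rewrite ffunE eqxx. Qed.

Lemma ffun_upd_upd f k v w : ffun_upd (ffun_upd f k v) k w = ffun_upd f k w.
Proof. by apply/ffunP => x; rewrite !ffunE; case: eqP. Qed.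

Lemma ffun_upd_id f k : ffun_upd f k (f k) = f.
Proof. by apply/ffunP => x; rewrite !ffunE; case: eqP => // ->. Qed.

(* (f, v) |-> (ffun_upd f (k f) v, f (k f)) is an involution on the pairs with [F f] *)
Lemma sum_resample (U : nmodType) (F : pred {ffun K -> V}) (k : {ffun K -> V} -> K)
    (G : {ffun K -> V} -> V -> U) :
  (forall f v, F f -> let f' := ffun_upd f (k f) v in [/\ F f', k f' = k f & G f' =1 G f]) ->
  (\sum_(f | F f) G f (f (k f))) *+ #|V| = \sum_(f | F f) \sum_v G f v.
Proof.
move=> inv; rewrite -sumrMnl.
pose swap (x : {ffun K -> V} * V) :=
  if F x.1 then (ffun_upd x.1 (k x.1) x.2, x.1 (k x.1)) else x.
have swapK : involutive swap.
  case=> f v; rewrite /swap /=; case Ff: (F f) => /=; last by rewrite Ff.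
  by have [-> -> _] := inv f v Ff; rewrite ffun_upd_upd ffun_upd_id ffun_upd_eq.
have pairE (H : {ffun K -> V} -> V -> U) : \sum_(f | F f) \sum_v H f v =
    \sum_(x : {ffun K -> V} * V) (if F x.1 then H x.1 x.2 else 0).
  rewrite -(pair_bigA _ (fun f v => if F f then H f v else 0)) big_mkcond /=.
  by apply: eq_bigr => f _; case: (F f); rewrite // big1.
rewrite (eq_bigr (fun f => \sum_(v : V) G f (f (k f)))); last by move=> f _; rewrite sumr_const.
rewrite !pairE (reindex_inj (inv_inj swapK)); apply: eq_bigr => -[f v] _.
rewrite /swap /=; case Ff: (F f) => /=; last by rewrite Ff.
by have [-> -> GE] := inv f v Ff; rewrite ffun_upd_eq GE.
Qed.

End Resample.

Local Notation action n := (option 'I_n.+1 * bool * bool)%type.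

Section Machine.
Variable n : nat.
Implicit Types (p : prog n) (s : status n).

Definition cfg_key s : 'I_n.+1 * bool :=
  if s is Running q tp h then (q, tp h) else (ord0, false).
Definition cfg_state s : 'I_n.+1 := if s is Running q _ _ then q else ord0.
Definition cfg_pos s : nat := if s is Running _ _ h then h else 0.
Definition is_running s := if s is Running _ _ _ then true else false.
Definition is_felloff s := if s is FellOff then true else false.

Definition step_with s (a : action n) : status n := step [ffun => a] s.

Lemma step_withE p s : step p s = step_with s (p (cfg_key s)).
Proof. by case: s => //= q tp h; rewrite ffunE. Qed.

Lemma card_action : #|{: action n}| = (4 * n.+2)%N.
Proof. rewrite !card_prod card_option card_ord card_bool; lia. Qed.

Lemma sum_action (U : nmodType) (G : action n -> U) :
  \sum_a G a = \sum_(o : option 'I_n.+1) \sum_(j : bool) (G (o, j, true) + G (o, j, false)).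
Proof.
rewrite (eq_bigr (fun a => G (a.1.1, a.1.2, a.2))); last by case=> [[]].
rewrite -(pair_bigA _ (fun x (d : bool) => G (x.1, x.2, d))) /=.
rewrite -(pair_bigA _ (fun o (j : bool) => \sum_(d : bool) G (o, j, d))) /=.
by apply: eq_bigr => o _; apply: eq_bigr => j _; rewrite big_bool.
Qed.

Lemma sum_action_survival (R : realType) s t : is_running s ->
  \sum_(a : action n) (if is_running (step_with s a) then survival R t (cfg_pos (step_with s a)) else 0)
  <= survival R t.+1 (cfg_pos s) *+ #|{: action n}|.
Proof.
case: s => // q tp h _.
pose G a := if is_running (step_with (Running q tp h) a)
  then survival R t (cfg_pos (step_with (Running q tp h) a)) else 0.
rewrite (sum_action G).
have pairG o j : G (o, j, true) + G (o, j, false) <= survival R t.+1 h *+ 2.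
  rewrite survivalS -[X in _ <= X]mulr_natr divfK ?pnatr_eq0 // /G /step_with /= !ffunE.
  apply: lerD; first by case: o => [r|] /=; rewrite ?lexx ?survival_ge0.
  by case: h {G} => [|h] /=; case: o => [r|] /=; rewrite ?lexx ?survival_ge0.
apply: le_trans (ler_sum _ (fun o _ => ler_sum _ (fun j _ => pairG o j))) _.
by rewrite !sumr_const card_option card_ord card_bool card_action -!mulrnA mulnA lexx.
Qed.

Definition revisits s (L : seq 'I_n.+1) : bool :=
  match s with Running q _ _ => q \in L | Halted => true | FellOff => false end.

Lemma sum_action_revisits (R : realType) s L : is_running s ->
  \sum_(a : action n) ((revisits (step_with s a) L)%:R : R) <= (4 * (size L).+1)%:R.
Proof.
case: s => // q tp h _; set L' := None :: map Some L.
have le_L' (a : action n) : (revisits (step_with (Running q tp h) a) L)%:R <= ((a.1.1 \in L')%:R : R).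
  case: a => [[o j] d]; rewrite ler_nat /step_with /= ffunE /=.
  by case: d; [|case: (h == 0)%N]; case: o => [r|]; rewrite //= inE ?(mem_map (@Some_inj _)).
apply: le_trans (ler_sum _ (fun a _ => le_L' a)) _.
rewrite sum_action /= (eq_bigr (fun o => ((o \in L')%:R : R) *+ 4)); last first.
  by move=> o _; rewrite sumr_const card_bool -mulr2n -mulrnA.
rewrite sumrMnl sumr_indicator -mulrnA ler_nat mulnC leq_mul2l /=.
by have := card_size L'; rewrite /= size_map.
Qed.

Definition run T p i : status n := iter i (step p) (init n T).

Lemma runS T p i : run T p i.+1 = step p (run T p i).
Proof. by []. Qed.

End Machine.

Arguments run : simpl never.

Section FreshRuns.
Variables (n T : nat).
Implicit Types (p : prog n).

Fixpoint visited p t : seq 'I_n.+1 :=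
  cfg_state (run T p t) :: (if t is t'.+1 then visited p t' else [::]).

Fixpoint fresh p t : bool :=
  if t is t'.+1 then
    [&& fresh p t', is_running (run T p t) & cfg_state (run T p t) \notin visited p t']
  else true.

Lemma size_visited p t : size (visited p t) = t.+1.
Proof. by elim: t => //= t ->. Qed.

Lemma mem_visited p t i : (i <= t)%N -> cfg_state (run T p i) \in visited p t.
Proof.
elim: t => [|t IH]; first by rewrite leqn0 => /eqP ->; rewrite inE.
by rewrite leq_eqVlt inE => /orP[/eqP -> | /IH ->]; rewrite ?eqxx ?orbT.
Qed.

Lemma fresh_running p t : fresh p t -> is_running (run T p t).
Proof. by case: t => [|t] //= /and3P[]. Qed.

Lemma fresh_le p t i : fresh p t -> (i <= t)%N -> fresh p i.
Proof.
elim: t => [|t IH] Ft; first by rewrite leqn0 => /eqP ->.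
by rewrite leq_eqVlt => /orP[/eqP -> // | ]; apply: IH; case/and3P: Ft.
Qed.

Lemma fresh_key_neq p t i : fresh p t -> (i < t)%N ->
  cfg_key (run T p i) != cfg_key (run T p t).
Proof.
case: t => // t Ft; rewrite ltnS => it; have /and3P[Ft' _ new] := Ft.
have := fresh_running (fresh_le Ft' it); have := fresh_running Ft.
case: (run T p t.+1) new => // q tp h new _.
case: (run T p i) (mem_visited p it) => //= q' tp' h' seen _.
by apply: (contraNneq _ new) => -[<- _].
Qed.

Lemma run_upd_fresh p t a : fresh p t -> forall i, (i <= t)%N ->
  run T (ffun_upd p (cfg_key (run T p t)) a) i = run T p i.
Proof.
move=> Ft; elim=> [|i IH] it //.
rewrite !runS IH ?(ltnW it) // [LHS]step_withE [RHS]step_withE.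
by rewrite ffunE (negPf (fresh_key_neq Ft it)).
Qed.

Lemma fresh_visited_ext p p' t : (forall i, (i <= t)%N -> run T p' i = run T p i) ->
  fresh p' t = fresh p t /\ visited p' t = visited p t.
Proof.
elim: t => [|t IH] E /=; first by [].
by have [-> ->] := IH (fun i it => E i (leqW it)); rewrite E.
Qed.

Lemma sum_fresh_resample (U : nmodType) t (G : status n -> seq 'I_n.+1 -> action n -> U) :
  (\sum_(p | fresh p t) G (run T p t) (visited p t) (p (cfg_key (run T p t)))) *+ #|{: action n}| =
  \sum_(p | fresh p t) \sum_a G (run T p t) (visited p t) a.
Proof.
apply: (sum_resample (F := fresh^~ t) (k := fun p => cfg_key (run T p t))
                     (G := fun p => G (run T p t) (visited p t))) => p a Ft /=.
have E := run_upd_fresh a Ft; have [-> ->] := fresh_visited_ext E.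
by rewrite E.
Qed.

Definition collision p t := fresh p t && revisits (run T p t.+1) (visited p t).

Lemma run_cases p t : ~~ is_felloff (run T p t) -> fresh p t || [exists i : 'I_t, collision p i].
Proof.
elim: t => [|t IH] // alive.
have /IH/orP[Ft | /existsP[i ci]] : ~~ is_felloff (run T p t).
  by move: alive; rewrite runS; case: (run T p t).
- case: (boolP (revisits (run T p t.+1) (visited p t))) => rev.
    by apply/orP; right; apply/existsP; exists ord_max; rewrite /collision Ft rev.
  by apply/orP; left; rewrite /= Ft; case: (run T p t.+1) alive rev.
- by apply/orP; right; apply/existsP; exists (widen_ord (leqnSn t) i).
Qed.

End FreshRuns.

Section Counting.
Variables (R : realType) (n T : nat).
Local Notation nprog := (#|{: prog n}|%:R : R).

Definition fresh_weight t (p : prog n) : R :=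
  if fresh T p t then survival R (T - t) (cfg_pos (run T p t)) else 0.

(* while the run stays fresh, the head performs a fair random walk *)
Lemma sum_fresh_weightS t : (t < T)%N ->
  \sum_(p : prog n) fresh_weight t.+1 p <= \sum_(p : prog n) fresh_weight t p.
Proof.
move=> tT.
pose G (s : status n) (_ : seq 'I_n.+1) (a : action n) :=
  if is_running (step_with s a) then survival R (T - t.+1) (cfg_pos (step_with s a)) else 0.
have le_resampled : \sum_(p : prog n) fresh_weight t.+1 p <=
    \sum_(p | fresh T p t) G (run T p t) (visited T p t) (p (cfg_key (run T p t))).
  rewrite [X in _ <= X]big_mkcond; apply: ler_sum => p _; rewrite /fresh_weight /G -step_withE -runS.
  case Ft1: (fresh T p t.+1); last by do 2!case: ifP => //; rewrite survival_ge0.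
  by move: (Ft1) => /= /and3P[-> _ _]; rewrite (fresh_running Ft1).
rewrite -(@ler_pMn2r _ #|{: action n}|); last by rewrite card_action.
apply: le_trans (ler_wMn2r _ le_resampled) _.
rewrite sum_fresh_resample -sumrMnl [X in X <= _]big_mkcond /=; apply: ler_sum => p _.
rewrite /fresh_weight; case: ifP => Ft; last by rewrite mul0rn.
by rewrite -(subnSK tT); exact: sum_action_survival (fresh_running Ft).
Qed.

Lemma sum_fresh_le_survival : \sum_(p : prog n) ((fresh T p T)%:R : R) <= nprog * survival R T 0.
Proof.
have decr t : (t <= T)%N -> \sum_(p : prog n) fresh_weight t p <= \sum_(p : prog n) fresh_weight 0 p.
  by elim: t => [|t IH] tT //; exact: le_trans (sum_fresh_weightS tT) (IH (ltnW tT)).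
have -> : nprog * survival R T 0 = \sum_(p : prog n) fresh_weight 0 p.
  rewrite (eq_bigr (fun=> survival R T 0)) ?sumr_const ?mulr_natl // => p _.
  by rewrite /fresh_weight subn0.
apply: le_trans (decr T (leqnn T)); apply: ler_sum => p _.
by rewrite /fresh_weight subnn; case: (fresh T p T).
Qed.

Lemma sum_collision t :
  \sum_(p : prog n) ((collision T p t)%:R : R) <= nprog * ((4 * t.+2)%:R / #|{: action n}|%:R).
Proof.
rewrite mulrA ler_pdivlMr ?mulr_natr; last by rewrite ltr0n card_action.
pose G (s : status n) L (a : action n) := ((revisits (step_with s a) L)%:R : R).
have -> : \sum_(p : prog n) ((collision T p t)%:R : R) =
    \sum_(p | fresh T p t) G (run T p t) (visited T p t) (p (cfg_key (run T p t))).
  rewrite [RHS]big_mkcond; apply: eq_bigr => p _.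
  by rewrite /collision /G -step_withE -runS; case: (fresh T p t).
rewrite sum_fresh_resample.
apply: le_trans (_ : \sum_(p | fresh T p t) (4 * t.+2)%:R <= _).
  apply: ler_sum => p Ft; rewrite -(size_visited T p t).
  exact: sum_action_revisits (fresh_running Ft).
by rewrite sumr_const -!mulrnA ler_nat mulnC leq_mul2r max_card orbT.
Qed.

End Counting.

Section Simulation.
Variable n : nat.
Implicit Types (p : prog n) (s : status n).

Definition agree_upto T s1 s2 : Prop :=
  match s1, s2 with
  | Running q1 tp1 h1, Running q2 tp2 h2 =>
      [/\ q1 = q2, h1 = h2 & forall k, (k <= T)%N -> tp1 k = tp2 k]
  | Halted, Halted | FellOff, FellOff => True
  | _, _ => False
  end.

Lemma agree_step T p s1 s2 :
  agree_upto T s1 s2 -> (cfg_pos s1 <= T)%N -> agree_upto T (step p s1) (step p s2).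
Proof.
case: s1 s2 => [q tp1 h||] [q2 tp2 h2||] //= [<- <- tpE] hT.
rewrite (tpE _ hT); case: (p (q, tp2 h)) => [[r j] d].
have tpE' k : (k <= T)%N -> (if k == h then j else tp1 k) = (if k == h then j else tp2 k).
  by move=> kT; rewrite tpE.
by case: d; [case: r | case: (h == 0)%N; last case: r].
Qed.

Lemma cfg_pos_run T p i : (cfg_pos (run T p i) <= i)%N.
Proof.
elim: i => // i; rewrite runS; case: (run T p i) => //= q tp h hi.
by case: (p (q, tp h)) => [[[r|] j] [|]]; case: (h == 0)%N => //=; lia.
Qed.

(* the head reads only cells [0..T] during the first T steps *)
Lemma agree_run p T m : (T <= m)%N -> forall i, (i <= T)%N -> agree_upto T (run T p i) (run m p i).
Proof.
move=> Tm; elim=> [|i IH] iT; first by split=> // k kT; rewrite kT (leq_trans kT Tm).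
by rewrite !runS; apply: agree_step (IH (ltnW iT)) (leq_trans (cfg_pos_run _ _ _) (ltnW iT)).
Qed.

Lemma run_stuck T p s i j : step p s = s -> (i <= j)%N -> run T p i = s -> run T p j = s.
Proof.
move=> fix_s /subnK <- runi; rewrite /run iterD -[iter i _ _]/(run T p i) runi.
by elim: (j - i)%N => //= k ->.
Qed.

Lemma felloff_FIN T p : run T p T = FellOff -> FIN p.
Proof.
move=> fell; exists T => m [t halt]; rewrite ltnNge; apply/negP => Tm.
have := agree_run p Tm (leqnn T); rewrite fell; case runT: (run m p T) => // _.
case: (leqP t T) => tT.
- by have := run_stuck (s := Halted) erefl tT halt; rewrite runT.
- by have := run_stuck (s := FellOff) erefl (ltnW tT) runT; rewrite [LHS]halt.
Qed.

End Simulation.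

Lemma FIN_COF_disjoint n (p : prog n) : FIN p -> COF p -> False.
Proof.
move=> [N finN] [M cofM]; have := finN (maxn N M) (cofM _ (leq_maxr N M)).
by rewrite ltnNge leq_maxl.
Qed.

Section Proportions.
Variable R : realType.

Lemma card_prog_gt0 n : (0 < #|{: prog n}|)%N.
Proof. by apply/card_gt0P; exists [ffun => (None, false, false)]. Qed.

Lemma proportion_ge0 B n : 0 <= proportion R B n.
Proof. by rewrite /proportion divr_ge0. Qed.

Lemma proportion_le1 B n : proportion R B n <= 1.
Proof. by rewrite /proportion ler_pdivrMr ?ltr0n ?card_prog_gt0 // mul1r ler_nat max_card. Qed.

Lemma sum_not_felloff n T :
  \sum_(p : prog n) ((~~ is_felloff (run T p T))%:R : R) <=
  #|{: prog n}|%:R * (survival R T 0 + T%:R * ((4 * T.+1)%:R / #|{: action n}|%:R)).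
Proof.
have alive_le (p : prog n) : ((~~ is_felloff (run T p T))%:R : R) <=
    (fresh T p T)%:R + \sum_(i < T) ((collision T p i)%:R : R).
  have sum_ge0 : 0 <= \sum_(i < T) ((collision T p i)%:R : R) by apply: sumr_ge0.
  case: (boolP (is_felloff _)) => [_ | /run_cases /orP[-> | /existsP[k ck]]] /=.
  + by rewrite addr_ge0.
  + by rewrite lerDl.
  + by rewrite (bigD1 k) //= ck addrCA lerDl addr_ge0 //; apply: sumr_ge0.
have le_collision (i : 'I_T) : \sum_(p : prog n) ((collision T p i)%:R : R) <=
    #|{: prog n}|%:R * ((4 * T.+1)%:R / #|{: action n}|%:R).
  apply: le_trans (@sum_collision R n T i) _; apply: ler_wpM2l => //.
  by apply: ler_wpM2r; rewrite ?invr_ge0 // ler_nat leq_mul2l ltnS ltn_ord orbT.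
apply: le_trans (ler_sum _ (fun p _ => alive_le p)) _.
rewrite big_split /= exchange_big /= mulrDr; apply: lerD; first exact: sum_fresh_le_survival.
apply: le_trans (ler_sum _ (fun i _ => le_collision i)) _.
by rewrite sumr_const card_ord -[_ *+ T]mulr_natl mulrCA.
Qed.

Lemma FIN_complement_le n T :
  1 - proportion R FIN n <= survival R T 0 + T%:R * ((4 * T.+1)%:R / #|{: action n}|%:R).
Proof.
have nprog_gt0 : (0 : R) < #|{: prog n}|%:R by rewrite ltr0n card_prog_gt0.
have fell_FIN : (#|[pred p : prog n | is_felloff (run T p T)]| <= #|[pred p : prog n | `[< FIN p >]]|)%N.
  apply: subset_leq_card; apply/fintype.subsetP => p.
  rewrite !inE => fell; apply: (felloff_FIN (T := T)).
  by case: (run T p T) fell.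
have nprogE : \sum_(p : prog n) ((~~ is_felloff (run T p T))%:R : R) +
    #|[pred p : prog n | is_felloff (run T p T)]|%:R = #|{: prog n}|%:R.
  rewrite -sumr_indicator -big_split /= (eq_bigr (fun=> 1)) ?sumr_const // => p _.
  by rewrite inE; case: (is_felloff _); rewrite ?add0r ?addr0.
rewrite /proportion lerBlDr -(ler_pM2r nprog_gt0) mulrDl divfK ?gt_eqF // mul1r.
by rewrite -[X in X <= _]nprogE mulrC; apply: lerD; [exact: sum_not_felloff | rewrite ler_nat].
Qed.

Lemma COF_le_FIN_complement n : proportion R COF n <= 1 - proportion R FIN n.
Proof.
have nprog_gt0 : (0 : R) < #|{: prog n}|%:R by rewrite ltr0n card_prog_gt0.
rewrite /proportion lerBrDr -mulrDl ler_pdivrMr // mul1r -!sumr_indicator -big_split /=.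
apply: ler_sum => p _; rewrite !inE.
case: (asboolP (COF p)) => cof; case: (asboolP (FIN p)) => fin //=.
- by case: (FIN_COF_disjoint fin cof).
- by rewrite addr0.
- by rewrite add0r.
- by rewrite addr0 ler01.
Qed.

Lemma FIN_complement_small (e : R) : 0 < e ->
  exists N, forall n, (N <= n)%N -> 1 - proportion R FIN n <= e.
Proof.
move=> e0; have [T survT] := survival_small (divr_gt0 e0 (ltr0Sn _ 1)).
set c : R := T%:R * (4 * T.+1)%:R.
exists (Num.truncn (c / (e / 2))) => n Nn.
apply: le_trans (FIN_complement_le n T) _; rewrite [e in _ <= e](splitr e).
apply: lerD => //; rewrite mulrA -/c ler_pdivrMr ?card_action ?ltr0n //.
rewrite -ler_pdivrMl ?divr_gt0 // mulrC; apply/ltW/(lt_le_trans (truncnS_gt _)).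
by rewrite ler_nat; apply: leq_ltn_trans Nn _; lia.
Qed.

End Proportions.

Theorem mainTheorem9 (R : realType) :
  asym_prob_is R FIN 1%R /\ asym_prob_is R COF 0%R.
Proof.
split; apply/cvgrPdist_le => e e0; have [N smallN] := FIN_complement_small e0.
- exists N => // n /= Nn.
  by rewrite ger0_norm ?subr_ge0 ?proportion_le1 // smallN.
- exists N => // n /= Nn.
  rewrite sub0r normrN ger0_norm ?proportion_ge0 //.
  exact: le_trans (COF_le_FIN_complement R n) (smallN n Nn).
Qed.
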